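(* Let $k$ be a field, let $M$ be an $n$-dimensional vector space over $k$ with basis $\{m_1,\dots,m_n\}$, and let $\phi:\{1,\dots,n\}\to\{1,\dots,n\}$ be a function with $\phi^2=\phi$. Define $R^\phi:M\otimes M\to M\otimes M$ by $$R^\phi(m_i\otimes m_j)=\delta_{ij}\,\delta_{i\in \mathrm{Im}(\phi)}\sum_{a,b\in\phi^{-1}(i)} m_a\otimes m_b$$ for all $i,j=1,\dots,n$, where $\delta_{i\in\mathrm{Im}(\phi)}$ equals $1$ if $i\in\mathrm{Im}(\phi)$ and $0$ otherwise. Then $R:=R^\phi$ is symmetric and satisfies $$R^{12}R^{13}=R^{13}R^{12}=R^{12}R^{23}=R^{23}R^{12}.$$ In particular, $R^\phi$ is a solution of the Long equation $R^{12}R^{13}=R^{13}R^{12}$, $R^{12}R^{23}=R^{23}R^{12}$.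
   Context: For $R\in\mathrm{End}_k(M\otimes M)$: $R^{12}=R\otimes I$, $R^{23}=I\otimes R$, $R^{13}=(I\otimes\tau)(R\otimes I)(I\otimes\tau)$, where $\tau(m\otimes n)=n\otimes m$ is the flip, and these are viewed in $\mathrm{End}_k(M\otimes M\otimes M)$. $R$ is called symmetric if $R^{12}=R^{21}$, where $R^{21}=\tau R\tau$; in coordinates, writing $R(m_v\otimes m_u)=\sum_{i,j}x^{ji}_{uv}m_i\otimes m_j$, symmetry is expressed as $x^{ji}_{uv}=x^{ji}_{vu}$ for all $i,j,u,v$. *)

From mathcomp Require Import all_boot all_algebra.
Set Implicit Arguments. Unset Strict Implicit. Unset Printing Implicit Defensive.
Import GRing.Theory.
Local Open Scope ring_scope.

(* M = k^n with basis m_0..m_{n-1} (indices 'I_n).  M (x) M has basis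
   m_a (x) m_b indexed by pairs, M (x) M (x) M by triples.  An endomorphism
   is represented by its matrix in these bases:
   A p q = coefficient of the basis vector m_p in A(m_q). *)
Section Tensor.
Variables (k : fieldType) (n : nat).

Definition idx2 := ('I_n * 'I_n)%type.
Definition idx3 := ('I_n * 'I_n * 'I_n)%type.
Definition end2 := idx2 -> idx2 -> k.
Definition end3 := idx3 -> idx3 -> k.

Definition comp2 (A B : end2) : end2 :=
  fun p q => \sum_(r : idx2) A p r * B r q.
Definition comp3 (A B : end3) : end3 :=
  fun p q => \sum_(r : idx3) A p r * B r q.

Definition tau : end2 :=
  fun p q => ((p.1 == q.2) && (p.2 == q.1))%:R.
Definition id_tau : end3 :=
  fun p q => let: (a, b, c) := p in let: (u, v, w) := q in
             [&& a == u, b == w & c == v]%:R.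

Definition R12 (R : end2) : end3 :=
  fun p q => let: (a, b, c) := p in let: (u, v, w) := q in
             R (a, b) (u, v) * (c == w)%:R.
Definition R23 (R : end2) : end3 :=
  fun p q => let: (a, b, c) := p in let: (u, v, w) := q in
             (a == u)%:R * R (b, c) (v, w).
Definition R13 (R : end2) : end3 := comp3 id_tau (comp3 (R12 R) id_tau).
Definition R21 (R : end2) : end2 := comp2 tau (comp2 R tau).

(* The paper defines it as R^12 = R^21 (i.e. R = tau R tau) and
   states that in coordinates it reads x^{ji}_{uv} = x^{ji}_{vu}, where
   R(m_v (x) m_u) = sum_{i,j} x^{ji}_{uv} m_i (x) m_j, i.e. the coordinate
   of m_i (x) m_j in R(m_v (x) m_u) equals that in R(m_u (x) m_v).
   We require both forms. *)
Definition symmetricR (R : end2) : Prop :=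
  R21 R = R /\ (forall i j u v, R (i, j) (v, u) = R (i, j) (u, v)).

Definition Rphi (phi : 'I_n -> 'I_n) : end2 :=
  fun p q => let: (a, b) := p in let: (i, j) := q in
    (i == j)%:R * (i \in codom phi)%:R * ((phi a == i) && (phi b == i))%:R.

End Tensor.

From mathcomp Require Import all_boot all_algebra.
From Stdlib Require Import FunctionalExtensionality.
Set Implicit Arguments. Unset Strict Implicit. Unset Printing Implicit Defensive.
Import GRing.Theory.
Local Open Scope ring_scope.

(* With [A p q] the coefficient of [m_p] in [A m_q], the matrix of
   [R^phi] has a single 1 in each row [(a, b)] with [phi a = phi b], namely in
   column [(phi a, phi b)], and zero rows elsewhere: it is the graph of a
   partial map on basis indices.  So are [R^12], [R^13], [R^23] and the flips,
   and products of such matrices are the graphs of the composite partial maps.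
   Because [phi] is idempotent, each of the four products is the graph of
   [(a, b, c) |-> (phi a, phi b, phi c)] restricted to
   [phi a = phi b = phi c]. *)

Section GraphMatrix.
Variables (K : pzSemiRingType) (T : finType).

Definition graph_mx (g : pred T) (f : T -> T) : T -> T -> K :=
  fun p q => (g p && (q == f p))%:R.

Lemma sum_graph_mx_mul g f (B : T -> T -> K) p q :
  \sum_r graph_mx g f p r * B r q = (g p)%:R * B (f p) q.
Proof.
rewrite (bigD1 (f p)) //= big1 ?addr0 => [|r /negbTE neq_r].
  by rewrite /graph_mx eqxx andbT.
by rewrite /graph_mx neq_r andbF mul0r.
Qed.

Lemma sum_graph_mx_mul_graph_mx g f g' f' p q :
  \sum_r graph_mx g f p r * graph_mx g' f' r q =
  graph_mx (fun p => g p && g' (f p)) (f' \o f) p q.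
Proof. by rewrite sum_graph_mx_mul /graph_mx -natrM mulnb andbA. Qed.

Lemma eq_graph_mx g g' f f' :
  g =1 g' -> f =1 f' -> graph_mx g f = graph_mx g' f'.
Proof.
move=> eq_g eq_f; apply: functional_extensionality => p.
by apply: functional_extensionality => q; rewrite /graph_mx eq_g eq_f.
Qed.

End GraphMatrix.
Arguments graph_mx {K T}.

Section TensorGraphs.
Variables (k : fieldType) (n : nat).

Lemma comp2_graph_mx (g g' : pred (idx2 n)) (f f' : idx2 n -> idx2 n) :
  comp2 (graph_mx g f) (graph_mx g' f') =
  graph_mx (fun p => g p && g' (f p)) (f' \o f) :> end2 k n.
Proof.
apply: functional_extensionality => p; apply: functional_extensionality => q.
exact: sum_graph_mx_mul_graph_mx.
Qed.

Lemma comp3_graph_mx (g g' : pred (idx3 n)) (f f' : idx3 n -> idx3 n) :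
  comp3 (graph_mx g f) (graph_mx g' f') =
  graph_mx (fun p => g p && g' (f p)) (f' \o f) :> end3 k n.
Proof.
apply: functional_extensionality => p; apply: functional_extensionality => q.
exact: sum_graph_mx_mul_graph_mx.
Qed.

Lemma tau_graph_mx :
  @tau k n = graph_mx predT (fun p : idx2 n => (p.2, p.1)) :> end2 k n.
Proof.
apply: functional_extensionality => -[a b].
apply: functional_extensionality => -[u v].
by rewrite /tau /graph_mx /= xpair_eqE (eq_sym a) (eq_sym b) andbC.
Qed.

Lemma id_tau_graph_mx :
  @id_tau k n = graph_mx predT (fun '(a, b, c) => (a, c, b)) :> end3 k n.
Proof.
apply: functional_extensionality => -[[a b] c].
apply: functional_extensionality => -[[u v] w].
rewrite /id_tau /graph_mx /= !xpair_eqE.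
by rewrite (eq_sym u) (eq_sym v) (eq_sym w) andbAC andbA.
Qed.

Lemma R12_graph_mx (g : pred (idx2 n)) (f : idx2 n -> idx2 n) :
  R12 (graph_mx g f) =
  graph_mx (fun p => g p.1) (fun p => (f p.1, p.2)) :> end3 k n.
Proof.
apply: functional_extensionality => -[[a b] c].
apply: functional_extensionality => -[[u v] w].
by rewrite /R12 /graph_mx /= -natrM mulnb xpair_eqE (eq_sym c) andbA.
Qed.

Lemma R23_graph_mx (g : pred (idx2 n)) (f : idx2 n -> idx2 n) :
  R23 (graph_mx g f) =
  graph_mx (fun '(a, b, c) => g (b, c))
           (fun '(a, b, c) => let: (v, w) := f (b, c) in (a, v, w)) :> end3 k n.
Proof.
apply: functional_extensionality => -[[a b] c].
apply: functional_extensionality => -[[u v] w].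
rewrite /R23 /graph_mx /= -natrM mulnb; case: (f (b, c)) => v' w'.
by rewrite !xpair_eqE (eq_sym a) andbCA -andbA.
Qed.

End TensorGraphs.

Section RphiGraph.
Variables (k : fieldType) (n : nat) (phi : 'I_n -> 'I_n).

Lemma Rphi_graph_mx :
  Rphi k phi =
  graph_mx (fun p => phi p.1 == phi p.2) (fun p => (phi p.1, phi p.2)).
Proof.
apply: functional_extensionality => -[a b].
apply: functional_extensionality => -[i j].
rewrite /Rphi /graph_mx /= -!natrM !mulnb xpair_eqE.
congr (_%:R); congr (nat_of_bool _).
apply/idP/idP.
  by case/and3P => /andP[/eqP <- _] /eqP <- /eqP <-; rewrite !eqxx.
by case/and3P => /eqP eq_ab /eqP -> /eqP ->; rewrite eq_ab codom_f !eqxx.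
Qed.

Lemma Rphi_swap_input i j u v :
  Rphi k phi (i, j) (v, u) = Rphi k phi (i, j) (u, v).
Proof.
by rewrite /Rphi /= (eq_sym v); case: (u =P v) => [->|_]; rewrite ?mul0r.
Qed.

Lemma R21_Rphi : R21 (Rphi k phi) = Rphi k phi.
Proof.
rewrite /R21 tau_graph_mx Rphi_graph_mx !comp2_graph_mx.
by apply: eq_graph_mx => -[a b] //=; rewrite andbT eq_sym.
Qed.

Lemma R12_Rphi :
  R12 (Rphi k phi) =
  graph_mx (fun '(a, b, c) => phi a == phi b)
           (fun '(a, b, c) => (phi a, phi b, c)).
Proof.
by rewrite Rphi_graph_mx R12_graph_mx; apply: eq_graph_mx => -[[a b] c].
Qed.

Lemma R13_Rphi :
  R13 (Rphi k phi) =
  graph_mx (fun '(a, b, c) => phi a == phi c)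
           (fun '(a, b, c) => (phi a, b, phi c)).
Proof.
rewrite /R13 id_tau_graph_mx R12_Rphi !comp3_graph_mx.
by apply: eq_graph_mx => -[[a b] c] //=; rewrite andbT.
Qed.

Lemma R23_Rphi :
  R23 (Rphi k phi) =
  graph_mx (fun '(a, b, c) => phi b == phi c)
           (fun '(a, b, c) => (a, phi b, phi c)).
Proof.
by rewrite Rphi_graph_mx R23_graph_mx; apply: eq_graph_mx => -[[a b] c].
Qed.

Hypothesis phi_idem : forall i, phi (phi i) = phi i.

Definition Rphi3 : end3 k n :=
  graph_mx (fun '(a, b, c) => (phi a == phi b) && (phi a == phi c))
           (fun '(a, b, c) => (phi a, phi b, phi c)).

Lemma comp3_R12_R13_Rphi :
  comp3 (R12 (Rphi k phi)) (R13 (Rphi k phi)) = Rphi3.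
Proof.
rewrite R12_Rphi R13_Rphi comp3_graph_mx.
by apply: eq_graph_mx => -[[a b] c] /=; rewrite phi_idem.
Qed.

Lemma comp3_R13_R12_Rphi :
  comp3 (R13 (Rphi k phi)) (R12 (Rphi k phi)) = Rphi3.
Proof.
rewrite R13_Rphi R12_Rphi comp3_graph_mx.
by apply: eq_graph_mx => -[[a b] c] /=; rewrite phi_idem // andbC.
Qed.

Lemma comp3_R12_R23_Rphi :
  comp3 (R12 (Rphi k phi)) (R23 (Rphi k phi)) = Rphi3.
Proof.
rewrite R12_Rphi R23_Rphi comp3_graph_mx.
apply: eq_graph_mx => -[[a b] c] /=; rewrite phi_idem //.
by case: (phi a =P phi b) => // ->.
Qed.

Lemma comp3_R23_R12_Rphi :
  comp3 (R23 (Rphi k phi)) (R12 (Rphi k phi)) = Rphi3.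
Proof.
rewrite R23_Rphi R12_Rphi comp3_graph_mx.
apply: eq_graph_mx => -[[a b] c] /=; rewrite phi_idem // andbC.
by case: (phi a =P phi b) => // ->.
Qed.

End RphiGraph.

Theorem proposition3p4 (k : fieldType) (n : nat) (phi : 'I_n -> 'I_n)
  (hphi : forall i, phi (phi i) = phi i) :
  let R := Rphi k phi in
  symmetricR R /\
  comp3 (R12 R) (R13 R) = comp3 (R13 R) (R12 R) /\
  comp3 (R13 R) (R12 R) = comp3 (R12 R) (R23 R) /\
  comp3 (R12 R) (R23 R) = comp3 (R23 R) (R12 R).
Proof.
rewrite /= comp3_R12_R13_Rphi // comp3_R13_R12_Rphi // comp3_R12_R23_Rphi //.
rewrite comp3_R23_R12_Rphi //; split=> //.
by split; [exact: R21_Rphi | exact: Rphi_swap_input].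
Qed.
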